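(* Let $n\in\mathbb{Z}^+$ with $n>0$. Then $$\binom{2n}{n} = \left((4^n+1)^{2n}\bmod (4^{n(n+1)}+1)\right)\bmod (4^n-1).$$
   Context: For integers, $u\bmod m$ denotes the least non-negative remainder of $u$ upon division by $m>0$. *)

From mathcomp Require Import all_boot.

From mathcomp Require Import all_boot.
From mathcomp Require Import zify.

(* Let x >= 4^n and c_k = 'C(2n, k), so that (x + 1)^(2n) = P + x^(n+1) N
   with P = sum_(k <= n) c_k x^k and N = sum_(j < n) c_(n+1+j) x^j.  Every
   c_k is below 2^(2n) <= x, so P and N are base-x numerals with
   N < x^n <= P < x^(n+1); as x^(n+1) = -1 modulo x^(n+1) + 1, the first
   remainder is exactly P - N.  Modulo x - 1 a numeral is congruent to its
   digit sum, and by the symmetry c_k = c_(2n-k) the digits of N cancel those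
   of P below x^n, leaving c_n < x - 1. *)

Lemma bin_lt_exp2 m k : 0 < m -> 'C(m, k) < 2 ^ m.
Proof.
elim: m k => [//|m IHm] [|k] _.
  by rewrite bin0 -{1}(expn0 2) ltn_exp2l.
case: m IHm => [|m] IHm; first by case: k.
rewrite binS expnS mul2n -addnn -addSn leq_add ?IHm //.
exact: ltnW (IHm _ _).
Qed.

Lemma bin_addn2_le_exp2 m k : 0 < k < m -> ('C(m, k)).+2 <= 2 ^ m.
Proof.
case: m => [|m]; case: k => [|k] //= lt_km.
have m_gt0 : 0 < m := leq_ltn_trans (leq0n k) lt_km.
have := @bin_lt_exp2 m k.+1 m_gt0; have := @bin_lt_exp2 m k m_gt0.
rewrite binS expnS; lia.
Qed.

Lemma sum_digits_lt x m (c : nat -> nat) : (forall j, j < m -> c j < x) ->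
  \sum_(0 <= j < m) c j * x ^ j < x ^ m.
Proof.
elim: m => [|m IHm] c_lt; first by rewrite big_geq.
rewrite big_nat_recr //= expnS.
have := IHm (fun j lt_jm => c_lt j (ltnW lt_jm)).
have : (c m).+1 * x ^ m <= x * x ^ m by rewrite leq_mul2r c_lt ?orbT.
nia.
Qed.

Lemma sum_digits_mod d x m (c : nat -> nat) : x = 1 %[mod d] ->
  \sum_(0 <= j < m) c j * x ^ j = \sum_(0 <= j < m) c j %[mod d].
Proof.
move=> x_mod; rewrite -modn_summ -[RHS]modn_summ; congr (_ %% _).
apply: eq_bigr => j _.
by rewrite -modnMmr -modnXm x_mod modnXm exp1n modnMmr muln1.
Qed.

Lemma expnD1_split x m s : s <= m.+1 ->
  (x + 1) ^ m = \sum_(0 <= k < s) 'C(m, k) * x ^ k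
                + x ^ s * \sum_(0 <= j < m.+1 - s) 'C(m, j + s) * x ^ j.
Proof.
move=> le_s_m1; rewrite addnC expnDn.
rewrite -(big_mkord xpredT (fun k => 'C(m, k) * (1 ^ (m - k) * x ^ k))).
rewrite (@big_cat_nat _ _ _ s) //= -[s in X in _ + X]add0n big_addn big_distrr.
congr (_ + _); apply: eq_bigr => k _; rewrite exp1n mul1n //.
by rewrite expnD mulnA mulnC.
Qed.

Lemma modnS_addM_sub y p q : q <= p -> p <= y -> (p + y * q) %% y.+1 = p - q.
Proof.
move=> le_qp le_py.
have -> : p + y * q = (p - q) + q * y.+1 by rewrite mulnS mulnC; lia.
by rewrite addnC modnMDl modn_small // ltnS (leq_trans (leq_subr q p)).
Qed.

Lemma sum_bin_upper_half n :
  \sum_(0 <= j < n) 'C(n.*2, j + n.+1) = \sum_(0 <= j < n) 'C(n.*2, j).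
Proof.
rewrite big_nat_rev /=; apply: eq_big_nat => j /andP[_ lt_jn].
by rewrite -bin_sub; [congr 'C(_, _) | ]; lia.
Qed.

Lemma central_bin_residue n x : 0 < n -> 4 ^ n <= x ->
  'C(n.*2, n) = ((x + 1) ^ n.*2 %% (x ^ n.+1 + 1)) %% (x - 1).
Proof.
move=> n_gt0 le_4n_x.
have exp4 : 4 ^ n = 2 ^ n.*2 by rewrite -muln2 mulnC expnM.
set c := fun k => 'C(n.*2, k).
have c_lt k : c k < x.
  by rewrite (leq_trans _ le_4n_x) // exp4 bin_lt_exp2 // double_gt0.
have cn_lt : c n < x - 1.
  have := @bin_addn2_le_exp2 n.*2 n; rewrite -exp4 -/(c n); lia.
have cn_gt0 : 0 < c n by rewrite bin_gt0 -addnn leq_addr.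
set P := \sum_(0 <= k < n.+1) c k * x ^ k.
set N := \sum_(0 <= j < n) c (j + n.+1) * x ^ j.
have expand : (x + 1) ^ n.*2 = P + x ^ n.+1 * N.
  rewrite (@expnD1_split x n.*2 n.+1); last by lia.
  by have -> : n.*2.+1 - n.+1 = n by lia.
have N_le_P : N <= P.
  have N_lt : N < x ^ n by apply: sum_digits_lt.
  have : c n * x ^ n <= P by rewrite /P big_nat_recr //= leq_addl.
  nia.
have P_lt : P < x ^ n.+1 by apply: sum_digits_lt.
rewrite expand addn1 modnS_addM_sub // 1?ltnW // -/(c n) -(modn_small cn_lt).
have x_mod : x = 1 %[mod x - 1] by rewrite -{1}(@subnK 1 x) ?modnDl //; lia.
have P_mod : P = \sum_(0 <= k < n) c k + c n %[mod x - 1].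
  by rewrite sum_digits_mod // big_nat_recr.
have N_mod : N = \sum_(0 <= k < n) c k %[mod x - 1].
  by rewrite sum_digits_mod // sum_bin_upper_half.
by apply/eqP; rewrite -(eqn_modDr N) subnK // -modnDmr N_mod modnDmr P_mod addnC.
Qed.

Theorem theorem5p1 (n : nat) (hn : 0 < n) :
  'C(n.*2, n) = ((4 ^ n + 1) ^ (n.*2) %% (4 ^ (n * (n + 1)) + 1)) %% (4 ^ n - 1).
Proof. by rewrite expnM (addn1 n); apply: central_bin_residue. Qed.
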